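(* Assume the all-zero codeword is transmitted and $y\in\Sigma^n$ is received. (1) If the LP decoder makes a codeword error, then there exists an LP pseudocodeword $(h,z)$ with $h\ne0$ and $\Lambda(y)h^T\le0$. (2) If there exists an LP pseudocodeword $(h,z)$ with $h\ne0$ and $\Lambda(y)h^T<0$, then the LP decoder makes a codeword error.
   Context: Let $R$ be a finite ring with $q$ elements, $R^-=R\setminus\{0\}$, $\mathcal H$ an $m\times n$ matrix over $R$, $\mathcal C=\{c\in R^n:c\mathcal H^T=0\}$, $\mathcal I=\{1,\dots,n\}$, $\mathcal J=\{1,\dots,m\}$, $\mathcal I_j=\{i:\mathcal H_{j,i}\ne0\}$, $\mathcal C_j=\{b\in R^{\mathcal I_j}:\sum_{i\in\mathcal I_j}b_i\mathcal H_{j,i}=0\}$. Vectors in $\mathbb R^{(q-1)n}$ have coordinates $f_i^{(\alpha)}$, $i\in\mathcal I$, $\alpha\in R^-$. $\mathcal Q$ is the set of $(f,w)$, $f\in\mathbb R^{(q-1)n}$, $w=(w_{j,b})_{j\in\mathcal J,b\in\mathcal C_j}$, with $w_{j,b}\ge0$, $\sum_{b\in\mathcal C_j}w_{j,b}=1$ for each $j$, and $f_i^{(\alpha)}=\sum_{b\in\mathcal C_j,b_i=\alpha}w_{j,b}$ for all $j$, $i\in\mathcal I_j$, $\alpha\in R^-$. The channel is memoryless with input alphabet $R$, output alphabet $\Sigma$, transition probability (density) $p(y\mid a)$; $\lambda^{(\alpha)}(y)=\log(p(y\mid0)/p(y\mid\alpha))$ and $\Lambda(y)$ has coordinates $\lambda^{(\alpha)}(y_i)$.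 The LP decoder selects a minimizer $(f,w)$ of $\Lambda(y)f^T$ over $\mathcal Q$; with the all-zero codeword transmitted, it makes a codeword error when the selected $f$ is not the zero vector. An LP pseudocodeword is a pair $(h,z)$ with $h\in\mathbb R^{(q-1)n}$ and $z=(z_{j,b})_{j\in\mathcal J,b\in\mathcal C_j}$ nonnegative integers such that $h_i^{(\alpha)}=\sum_{b\in\mathcal C_j,b_i=\alpha}z_{j,b}$ for all $j\in\mathcal J$, $i\in\mathcal I_j$, $\alpha\in R^-$, and $\sum_{b\in\mathcal C_j}z_{j,b}=M$ for all $j$, with $M$ a nonnegative integer independent of $j$. *)

From HB Require Import structures.
From mathcomp Require Import all_boot all_order all_algebra.
From mathcomp Require Import reals exp.
Set Implicit Arguments. Unset Strict Implicit. Unset Printing Implicit Defensive.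
Import Order.TTheory GRing.Theory Num.Theory.
Local Open Scope ring_scope.

Section LPDecoding.
Variables (Rg : finNzRingType) (m n : nat) (H : 'M[Rg]_(m, n)).
Variable (real : realType).

Definition nzR := {a : Rg | a != 0}.

(* local code C_j: configurations b on I_j, encoded as functions on 'I_n
   vanishing outside I_j = {i | H j i != 0}, satisfying the j-th check *)
Definition localCode (j : 'I_m) : {set {ffun 'I_n -> Rg}} :=
  [set b : {ffun 'I_n -> Rg} |
     [forall i, (H j i == 0) ==> (b i == 0)] && (\sum_i b i * H j i == 0)].

Definition inQ (f : 'I_n -> nzR -> real) (w : 'I_m -> {ffun 'I_n -> Rg} -> real) : Prop :=
  (forall j b, b \in localCode j -> 0 <= w j b) /\
  (forall j, \sum_(b in localCode j) w j b = 1) /\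
  (forall j i (a : nzR), H j i != 0 ->
      f i a = \sum_(b in localCode j | b i == val a) w j b).

Definition llr (Sigma : Type) (p : Sigma -> Rg -> real) (y : Sigma) (a : nzR) : real :=
  ln (p y 0 / p y (val a)).

Definition cost (Sigma : Type) (p : Sigma -> Rg -> real) (y : 'I_n -> Sigma)
  (f : 'I_n -> nzR -> real) : real :=
  \sum_(i < n) \sum_(a : nzR) llr p (y i) a * f i a.

Definition LPminimizer (Sigma : Type) (p : Sigma -> Rg -> real) (y : 'I_n -> Sigma)
  f w : Prop :=
  inQ f w /\ forall f' w', inQ f' w' -> cost p y f <= cost p y f'.

Definition nonzero_vec (f : 'I_n -> nzR -> real) : Prop := exists i a, f i a != 0.

Definition LPpseudocodeword (h : 'I_n -> nzR -> real)
  (z : 'I_m -> {ffun 'I_n -> Rg} -> nat) : Prop :=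
  (forall j i (a : nzR), H j i != 0 ->
      h i a = (\sum_(b in localCode j | b i == val a) z j b)%:R) /\
  exists M : nat, forall j, (\sum_(b in localCode j) z j b)%N = M.

End LPDecoding.

(** Part (2): a pseudocodeword (h, z) with total weight M can be mixed into any
    point (f, w) of Q, giving ((f + h) / (1 + M), (w + z) / (1 + M)) in Q; if
    (f, w) is optimal this forces M cost(f) <= cost(h) < 0, so f <> 0.

    Part (1): f is determined by w at every coordinate that some check involves,
    and the LLRs vanish at the other coordinates, so the optimal value is attained
    on the polytope of the w alone.  Starting from w and moving along directions
    of the linear system active at w, in both senses, the support shrinks while
    optimality and the nonvanishing of the marginals are preserved (the cost is
    constant along such a direction since both senses stay feasible).  When no
    direction is left, w is the unique solution of a system with rational
    coefficients, hence rational; clearing denominators yields the integral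
    pseudocodeword.  Its cost is at most that of the zero codeword, i.e. 0. *)

From Pilot Require Import Defs.
From HB Require Import structures.
From mathcomp Require Import all_boot all_order all_algebra.
From mathcomp Require Import reals.
From mathcomp Require Import lra.
From Stdlib Require Import Classical FunctionalExtensionality.
Import Order.TTheory GRing.Theory Num.Theory.
Local Open Scope ring_scope.
Set Implicit Arguments. Unset Strict Implicit. Unset Printing Implicit Defensive.

Lemma ratio_test (R : realFieldType) (T : finType) (x d : T -> R) (v0 : T) :
  (forall v, 0 <= x v) -> (forall v, x v = 0 -> d v = 0) -> d v0 < 0 ->
  exists2 t, 0 < t &
    (forall v, 0 <= x v + t * d v) /\ exists2 v1, x v1 != 0 & x v1 + t * d v1 = 0.
Proof.
move=> x_ge0 dx0 dv0_lt0.
have x_gt0 v : d v != 0 -> 0 < x v.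
  by move=> dv; rewrite lt_def x_ge0 andbT; apply: contra dv => /eqP /dx0 ->.
pose ratio v := x v / - d v.
case: (arg_minP (P := [pred v | d v < 0]) ratio dv0_lt0) => v1 dv1_lt0 ratio_min.
have dv1 : d v1 != 0 by rewrite lt_eqF.
exists (ratio v1); first by rewrite divr_gt0 ?x_gt0 // oppr_gt0.
split; last first.
  exists v1; first by rewrite gt_eqF ?x_gt0.
  by rewrite /ratio invrN mulrN mulNr -mulrA mulVf // mulr1 subrr.
move=> v; case: (ltP (d v) 0) => dv; last first.
  by rewrite addr_ge0 // mulr_ge0 // ltW // divr_gt0 ?x_gt0 ?lt_eqF // oppr_gt0.
have := ratio_min v dv; rewrite /ratio ler_pdivlMr ?oppr_gt0 // mulrN.
set u := _ * d v; lra.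
Qed.

Lemma rational_or_kernel (F : numFieldType) (T E : finType)
    (c : T -> E -> rat) (r : E -> rat) (x : T -> F) :
  (forall e, \sum_v x v * ratr (c v e) = ratr (r e)) ->
  (exists q : T -> rat, forall v, x v = ratr (q v)) \/
  exists2 d : T -> F, (forall e, \sum_v d v * ratr (c v e) = 0) & exists v, d v != 0.
Proof.
move=> x_sol.
pose A : 'M[rat]_(#|T|, #|E|) := \matrix_(k, l) c (enum_val k) (enum_val l).
pose Af := map_mx (@ratr F) A.
pose rv (u : T -> F) : 'rV[F]_#|T| := \row_k u (enum_val k).
have rvE u v : rv u 0 (enum_rank v) = u v by rewrite mxE enum_rankK.
have mulE u l : (rv u *m Af) 0 l = \sum_v u v * ratr (c v (enum_val l)).
  rewrite mxE [RHS](reindex _ (onW_bij _ (@enum_val_bij T))) /=.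
  by apply: eq_bigr => k _; rewrite !mxE.
case: (boolP (row_free Af)) => [A_free | A_nfree].
  left; pose b : 'rV[rat]_#|E| := \row_l r (enum_val l).
  have xA : rv x *m Af = map_mx ratr b.
    by apply/rowP => l; rewrite mulE x_sol !mxE.
  have /submxP[q bqA] : (b <= A)%MS.
    by rewrite -(map_submx (@ratr F)); apply/submxP; exists (rv x).
  exists (fun v => q 0 (enum_rank v)) => v; rewrite -rvE.
  suff -> : rv x = map_mx ratr q by rewrite mxE.
  by apply: (row_free_inj A_free); rewrite /= xA bqA map_mxM.
right; have [u uA u_neq0] : exists2 u : 'rV[F]_#|T|, u *m Af = 0 & u != 0.
  apply: NNPP => no_u; move/negP: A_nfree; apply; apply: inj_row_free => u uA.
  by apply: NNPP => u_neq0; apply: no_u; exists u => //; apply/eqP.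
have rv_u : rv (fun v => u 0 (enum_rank v)) = u.
  by apply/rowP => k; rewrite mxE enum_valK.
exists (fun v => u 0 (enum_rank v)).
  by move=> e; rewrite -[e]enum_rankK -mulE rv_u uA mxE.
by case/rV0Pn: u_neq0 => k uk; exists (enum_val k); rewrite enum_valK.
Qed.

Lemma common_denominator (T : finType) (q : T -> rat) : (forall v, 0 <= q v) ->
  exists2 D : nat, (0 < D)%N & exists z : T -> nat, forall v, (z v)%:R = D%:R * q v.
Proof.
move=> q_ge0; pose den v := `|denq (q v)|%N.
have den_gt0 v : (0 < den v)%N by rewrite absz_gt0 denq_neq0.
have den_dvd v : (den v %| \prod_v den v)%N by rewrite (bigD1 v) //= dvdn_mulr.
exists (\prod_v den v)%N; first by rewrite prodn_gt0.
exists (fun v => `|numq (q v)| * (\prod_v den v %/ den v))%N => v.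
rewrite natrM natr_absz ger0_norm ?numq_ge0 // numqE [RHS]mulrC -mulrA.
congr (_ * _); rewrite -[in RHS](divnK (den_dvd v)) natrM mulrC; congr (_ * _).
by rewrite /den natr_absz gtr0_norm ?denq_gt0.
Qed.

Lemma neg_term_of_sum_eq0 (R : realDomainType) (I : finType) (A : {pred I})
    (F : I -> R) i0 :
  i0 \in A -> F i0 != 0 -> \sum_(i in A) F i = 0 -> exists2 i, i \in A & F i < 0.
Proof.
move=> Ai0 Fi0 sumF0; apply: NNPP => no_neg; move/eqP: Fi0; apply.
apply: (psumr_eq0P _ sumF0 Ai0) => i Ai; rewrite leNgt; apply/negP => Fi_lt0.
by apply: no_neg; exists i.
Qed.

Lemma eq0_of_opposite_shifts (R : realFieldType) (a b s t : R) : 0 < s -> 0 < t ->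
  a + s * b = 0 -> a - t * b = 0 -> a = 0.
Proof.
move=> s_gt0 t_gt0 Es Et; have : (s + t) * b = 0 by rewrite mulrDl; lra.
move/eqP; rewrite mulf_eq0 gt_eqF ?addr_gt0 //= => /eqP b0.
by rewrite b0 mulr0 addr0 in Es.
Qed.

Section LPDecoding.
Variables (Rg : finNzRingType) (m n : nat) (H : 'M[Rg]_(m, n)) (real : realType).
Variables (Sigma : Type) (p : Sigma -> Rg -> real) (y : 'I_n -> Sigma).

Local Notation C := (localCode H).
Local Notation cost := (cost p y).
Local Notation llr i a := (llr p (y i) a).
Local Notation vec := ('I_n -> nzR Rg -> real).
Local Notation word := {ffun 'I_n -> Rg}.
Local Notation weights := ('I_m -> word -> real).

Lemma costD (f g : vec) : cost (fun i a => f i a + g i a) = cost f + cost g.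
Proof.
rewrite /Defs.cost -big_split; apply: eq_bigr => i _.
by rewrite -big_split; apply: eq_bigr => a _; rewrite mulrDr.
Qed.

Lemma costZ (c : real) (f : vec) : cost (fun i a => c * f i a) = c * cost f.
Proof.
rewrite /Defs.cost mulr_sumr; apply: eq_bigr => i _.
by rewrite mulr_sumr; apply: eq_bigr => a _; rewrite mulrCA.
Qed.

Lemma eq_cost (f g : vec) :
  (forall i a, llr i a * f i a = llr i a * g i a) -> cost f = cost g.
Proof. by move=> E; apply: eq_bigr => i _; apply: eq_bigr => a _; apply: E. Qed.

Lemma cost0 : cost (fun _ _ => 0) = 0.
Proof. by rewrite /Defs.cost big1 // => i _; rewrite big1 // => a _; rewrite mulr0. Qed.

Lemma cost_delta i0 a0 (c : real) :
  cost (fun i a => if (i == i0) && (a == a0) then c else 0) = llr i0 a0 * c.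
Proof.
rewrite /Defs.cost (bigD1 i0) //= [X in _ + X]big1 ?addr0; last first.
  by move=> i /negbTE ->; rewrite big1 // => a _; rewrite mulr0.
rewrite (bigD1 a0) //= big1 ?addr0 ?eqxx // => a /negbTE ->.
by rewrite andbF mulr0.
Qed.

Lemma not_nonzero_vec (f : vec) : ~ nonzero_vec f -> forall i a, f i a = 0.
Proof. by move=> f0 i a; apply: NNPP => fia; apply: f0; exists i, a; apply/eqP. Qed.

Lemma cost_neq0_nonzero (f : vec) : cost f != 0 -> nonzero_vec f.
Proof.
move=> cost_f; apply: NNPP => f0; move/eqP: cost_f; apply.
by rewrite -cost0; apply: eq_cost => i a; rewrite (not_nonzero_vec f0).
Qed.

(* A free coordinate of f can be moved at will inside Q, so optimality forces
   its LLR to vanish. *)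
Lemma llr_free_eq0 (f : vec) (w : weights) i0 a0 :
  LPminimizer H p y f w -> (forall j, H j i0 = 0) -> llr i0 a0 = 0.
Proof.
move=> [[w_ge0 [w_sum f_marg]] f_min] i0_free.
pose g i a := if (i == i0) && (a == a0) then - llr i0 a0 else 0.
have Qfg : inQ H (fun i a => f i a + g i a) w.
  split=> //; split=> // j i a Hji; rewrite /g; case: eqP => [Ei|_] /=.
    by subst i; rewrite i0_free eqxx in Hji.
  by rewrite addr0; apply: f_marg.
have := f_min _ _ Qfg; rewrite costD cost_delta lerDl mulrN oppr_ge0 -expr2.
by move=> sq_le0; apply/eqP; rewrite -sqrf_eq0 eq_le sq_le0 sqr_ge0.
Qed.

Lemma inQ_mix (f h : vec) (w : weights) (z : 'I_m -> word -> nat) (M : nat) :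
  inQ H f w ->
  (forall j i a, H j i != 0 -> h i a = (\sum_(b in C j | b i == val a) z j b)%:R) ->
  (forall j, \sum_(b in C j) z j b = M)%N ->
  inQ H (fun i a => (1 + M%:R)^-1 * (f i a + h i a))
        (fun j b => (1 + M%:R)^-1 * (w j b + (z j b)%:R)).
Proof.
move=> [w_ge0 [w_sum f_marg]] h_marg z_sum.
have M1_neq0 : (1 + M%:R : real) != 0 by rewrite gt_eqF // ltr_wpDr.
split; first by move=> j b Cb; rewrite mulr_ge0 ?invr_ge0 ?addr_ge0 ?ler0n ?w_ge0.
split; first by move=> j; rewrite -mulr_sumr big_split /= w_sum -natr_sum z_sum mulVf.
move=> j i a Hji.
by rewrite -mulr_sumr big_split /= (f_marg j) // (h_marg j) // natr_sum.
Qed.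

Lemma pseudocodeword_neg_cost_nonzero (h f : vec) z (w : weights) :
  LPpseudocodeword H h z ->
  cost h < 0 -> LPminimizer H p y f w -> nonzero_vec f.
Proof.
move=> [h_marg [M z_sum]] cost_h [Qf f_min]; apply: cost_neq0_nonzero.
have M1_gt0 : (0 : real) < 1 + M%:R by rewrite ltr_wpDr.
have := f_min _ _ (inQ_mix Qf h_marg z_sum).
rewrite costZ costD ler_pdivlMl // mulrDl mul1r lerD2l => Mf_le_h.
by apply: contraTneq Mf_le_h => ->; rewrite mulr0 -ltNge.
Qed.

Definition marginal (w : weights) j i (a : Rg) := \sum_(b in C j | b i == a) w j b.

Definition marginals (w : weights) : vec := fun i a =>
  if [pick j | H j i != 0] is Some j then marginal w j i (val a) else 0.

Definition consistent (w : weights) := forall j j' i a,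
  H j i != 0 -> H j' i != 0 -> a != 0 -> marginal w j i a = marginal w j' i a.

(* The polytope Q with f eliminated; w is normalized to vanish outside the
   local codes, so that feasible points live in the fixed finite space of
   all pairs (j, b). *)
Definition feasible (w : weights) :=
  [/\ forall j b, b \notin C j -> w j b = 0, forall j b, 0 <= w j b,
      forall j, \sum_(b in C j) w j b = 1 & consistent w].

Definition wcost (w : weights) := cost (marginals w).

Definition optimal (w : weights) :=
  feasible w /\ forall u, feasible u -> wcost w <= wcost u.

Lemma feasible_inQ w : feasible w -> inQ H (marginals w) w.
Proof.
case=> _ w_ge0 w_sum w_cons; split=> //; split=> // j i a Hji.
rewrite /marginals; case: pickP => [j' Hj'i | no_check]; last first.
  by move: (no_check j); rewrite Hji.
by apply: w_cons => //; apply: (svalP a).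
Qed.

Definition shift (w d : weights) (t : real) : weights := fun j b => w j b + t * d j b.

Lemma marginal_shift w d t j i a :
  marginal (shift w d t) j i a = marginal w j i a + t * marginal d j i a.
Proof. by rewrite /marginal big_split /= mulr_sumr. Qed.

Lemma marginals_shift w d t i a :
  marginals (shift w d t) i a = marginals w i a + t * marginals d i a.
Proof.
by rewrite /marginals; case: pickP => [j _|_]; rewrite ?marginal_shift ?mulr0 ?addr0.
Qed.

Lemma wcost_shift w d t : wcost (shift w d t) = wcost w + t * wcost d.
Proof.
by rewrite /wcost -costZ -costD; apply: eq_cost => i a; rewrite marginals_shift.
Qed.

Definition zero_word : word := [ffun=> 0].

Definition zero_weights : weights := fun j b => (b == zero_word)%:R.

Lemma zero_word_in_code j : zero_word \in C j.
Proof.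
rewrite inE; apply/andP; split; first by apply/forallP => i; rewrite ffunE eqxx implybT.
by rewrite big1 // => i _; rewrite ffunE mul0r.
Qed.

Lemma marginal_zero_weights j i a : a != 0 -> marginal zero_weights j i a = 0.
Proof.
move=> a_neq0; rewrite /marginal big1 // => b /andP[_ /eqP bi].
by rewrite /zero_weights; case: eqP => // b0; move: a_neq0; rewrite -bi b0 ffunE eqxx.
Qed.

Lemma feasible_zero_weights : feasible zero_weights.
Proof.
split.
- move=> j b; apply: contraNeq; rewrite pnatr_eq0 eqb0 negbK => /eqP ->.
  exact: zero_word_in_code.
- by move=> j b; rewrite ler0n.
- move=> j; rewrite (bigD1 zero_word) ?zero_word_in_code //=.
  rewrite big1 ?addr0 /zero_weights ?eqxx //.
  by move=> b /andP[_ /negbTE ->].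
- by move=> j j' i a _ _ a_neq0; rewrite !marginal_zero_weights.
Qed.

Lemma optimal_wcost_le0 w : optimal w -> wcost w <= 0.
Proof.
case=> _ w_min; suff <- : wcost zero_weights = 0 by apply/w_min/feasible_zero_weights.
rewrite /wcost -cost0; apply: eq_cost => i a; rewrite /marginals.
by case: pickP => [j _|_] //; rewrite marginal_zero_weights // (svalP a).
Qed.

Definition direction (w d : weights) :=
  [/\ forall j b, w j b = 0 -> d j b = 0, forall j, \sum_(b in C j) d j b = 0
    & consistent d].

Lemma directionN w d : direction w d -> direction w (fun j b => - d j b).
Proof.
case=> d_supp d_sum d_cons; split.
- by move=> j b /d_supp ->; rewrite oppr0.
- by move=> j; rewrite sumrN d_sum oppr0.
- move=> j j' i a Hji Hj'i a_neq0.
  by rewrite /marginal !sumrN; congr (- _); apply: d_cons.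
Qed.

Lemma shiftN w d t : shift w (fun j b => - d j b) t = shift w d (- t).
Proof.
by apply: functional_extensionality => j; apply: functional_extensionality => b;
  rewrite /shift mulrN mulNr.
Qed.

Lemma feasible_shift w d t : feasible w -> direction w d ->
  (forall j b, 0 <= shift w d t j b) -> feasible (shift w d t).
Proof.
move=> [w_out _ w_sum w_cons] [d_supp d_sum d_cons] shift_ge0; split=> //.
- by move=> j b Cb; rewrite /shift w_out // d_supp ?mulr0 ?addr0 // w_out.
- by move=> j; rewrite big_split /= -mulr_sumr d_sum mulr0 addr0 w_sum.
- move=> j j' i a Hji Hj'i a_neq0.
  by rewrite !marginal_shift (w_cons j j' i a) // (d_cons j j' i a).
Qed.

Definition supp (w : weights) : {set 'I_m * word} := [set v | w v.1 v.2 != 0].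

Lemma direction_step w d v0 : feasible w -> direction w d -> d v0.1 v0.2 < 0 ->
  exists2 t, 0 < t & feasible (shift w d t) /\ supp (shift w d t) \proper supp w.
Proof.
move=> w_feas d_dir dv0; have [_ w_ge0 _ _] := w_feas; have [d_supp _ _] := d_dir.
have [t t_gt0 [shift_ge0 [v1 wv1 shift_v1]]] :=
  ratio_test (x := fun v => w v.1 v.2) (d := fun v => d v.1 v.2)
    (fun v => w_ge0 v.1 v.2) (fun v => d_supp v.1 v.2) dv0.
exists t => //; split.
  by apply: feasible_shift => // j b; apply: (shift_ge0 (j, b)).
apply/properP; split.
  apply/subsetP => v; rewrite !inE /shift; apply: contra => /eqP wv.
  by rewrite wv d_supp ?mulr0 ?addr0.
by exists v1; rewrite !inE ?wv1 // negbK; apply/eqP.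
Qed.

Lemma optimal_reduce w d : optimal w -> nonzero_vec (marginals w) ->
  direction w d -> (exists v, d v.1 v.2 != 0) ->
  exists2 w', optimal w' /\ nonzero_vec (marginals w') & (#|supp w'| < #|supp w|)%N.
Proof.
move=> [w_feas w_min] w_nz d_dir [[j1 b1] /= d1]; have [d_supp d_sum _] := d_dir.
have Cb1 : b1 \in C j1.
  by apply: contraT => Cb1; move: d1; rewrite d_supp ?eqxx //; case: w_feas => ->.
have [b2 _ d2] := neg_term_of_sum_eq0 Cb1 d1 (d_sum j1).
have [b3 _ d3] : exists2 b, b \in C j1 & - d j1 b < 0.
  by apply: neg_term_of_sum_eq0 Cb1 _ _; rewrite ?oppr_eq0 ?sumrN ?d_sum ?oppr0.
have [s s_gt0 [feas_s supp_s]] := direction_step (v0 := (j1, b2)) w_feas d_dir d2.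
have [t t_gt0 []] := direction_step (v0 := (j1, b3)) w_feas (directionN d_dir) d3.
rewrite shiftN => feas_t supp_t.
have cost_d : wcost d = 0.
  have := w_min _ feas_s; have := w_min _ feas_t.
  rewrite !wcost_shift !lerDl mulNr oppr_ge0 pmulr_rle0 // pmulr_rge0 //.
  by move=> d_le0 d_ge0; apply/eqP; rewrite eq_le d_le0 d_ge0.
have opt_shift r : feasible (shift w d r) -> optimal (shift w d r).
  by move=> feas_r; split=> // u /w_min; rewrite wcost_shift cost_d mulr0 addr0.
have [nz_s | z_s] := classic (nonzero_vec (marginals (shift w d s))).
  by exists (shift w d s); [split; first apply: opt_shift | apply: proper_card].
have [nz_t | z_t] := classic (nonzero_vec (marginals (shift w d (- t)))).
  by exists (shift w d (- t)); [split; first apply: opt_shift | apply: proper_card].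
exfalso; case: w_nz => i [a] /eqP; apply.
apply: (eq0_of_opposite_shifts (b := marginals d i a) s_gt0 t_gt0).
  by rewrite -marginals_shift; apply: not_nonzero_vec.
by rewrite -mulNr -marginals_shift; apply: not_nonzero_vec.
Qed.

(* Rows of the linear system that a feasible point with the zero pattern of
   [w] satisfies: the vanishing coordinates of [w], the normalization at each
   check, and the consistency of the marginals at each pair of checks. *)
Definition active_row := ('I_m * word + 'I_m + 'I_m * 'I_m * 'I_n * Rg)%type.

Definition active_coef (R : nzRingType) (w : weights) (v : 'I_m * word)
    (e : active_row) : R :=
  match e with
  | inl (inl u) => if w u.1 u.2 == 0 then (v == u)%:R else 0
  | inl (inr j) => ((v.1 == j) && (v.2 \in C j))%:R
  | inr (j, j', i, a) => if [&& H j i != 0, H j' i != 0 & a != 0] then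
      ((v.1 == j) && ((v.2 \in C j) && (v.2 i == a)))%:R -
      ((v.1 == j') && ((v.2 \in C j') && (v.2 i == a)))%:R else 0
  end.

Definition active_rhs (R : nzRingType) (e : active_row) : R :=
  if e is inl (inr _) then 1 else 0.

Definition active_eval (w x : weights) e :=
  \sum_v x v.1 v.2 * active_coef real w v e.

Lemma ratr_active_coef w v e : ratr (active_coef rat w v e) = active_coef real w v e.
Proof.
case: e => [[u|j]|[[[j j'] i] a]] /=; rewrite ?ratr_nat //.
  by case: ifP; rewrite ?ratr_nat ?rmorph0.
by case: ifP => _; rewrite ?rmorph0 // rmorphB /= !ratr_nat.
Qed.

Lemma ratr_active_rhs e : ratr (active_rhs rat e) = active_rhs real e.
Proof. by case: e => [[u|j]|x]; rewrite /= ?rmorph0 ?rmorph1. Qed.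

Lemma sum_pair_sel (x : weights) j (P : pred word) :
  \sum_v x v.1 v.2 * ((v.1 == j) && P v.2)%:R = \sum_(b | P b) x j b.
Proof.
rewrite -(pair_bigA _ (fun k b => x k b * ((k == j) && P b)%:R)) /=.
rewrite (bigD1 j) //= [X in _ + X]big1 ?addr0; last first.
  by move=> k /negbTE Hk; rewrite big1 // => b _; rewrite Hk mulr0.
rewrite eqxx [RHS]big_mkcond; apply: eq_bigr => b _.
by case: (P b); rewrite ?mulr1 ?mulr0.
Qed.

Lemma active_eval_zero w x u :
  active_eval w x (inl (inl u)) = if w u.1 u.2 == 0 then x u.1 u.2 else 0.
Proof.
rewrite /active_eval /=; case: eqP => _; last by rewrite big1 // => v _; rewrite mulr0.
by rewrite (bigD1 u) //= eqxx mulr1 big1 ?addr0 // => v /negbTE ->; rewrite mulr0.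
Qed.

Lemma active_eval_sum w x j : active_eval w x (inl (inr j)) = \sum_(b in C j) x j b.
Proof. exact: (sum_pair_sel x j (fun b => b \in C j)). Qed.

Lemma active_eval_consistent w x j j' i a :
  active_eval w x (inr (j, j', i, a)) =
  if [&& H j i != 0, H j' i != 0 & a != 0]
  then marginal x j i a - marginal x j' i a else 0.
Proof.
rewrite /active_eval /=; case: ifP => _; last by rewrite big1 // => v _; rewrite mulr0.
under eq_bigr => v _ do rewrite mulrBr.
rewrite sumrB (sum_pair_sel x j (fun b => (b \in C j) && (b i == a))).
by rewrite (sum_pair_sel x j' (fun b => (b \in C j') && (b i == a))).
Qed.

Lemma feasible_active_eval w e : feasible w -> active_eval w w e = active_rhs real e.
Proof.
case=> _ _ w_sum w_cons; case: e => [[u|j]|[[[j j'] i] a]].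
- by rewrite active_eval_zero; case: eqP.
- by rewrite active_eval_sum w_sum.
- rewrite active_eval_consistent; case: ifP => //= /and3P[Hji Hj'i a_neq0].
  by rewrite (w_cons j j' i a) // subrr.
Qed.

Lemma active_kernel_direction w d :
  (forall e, active_eval w d e = 0) -> direction w d.
Proof.
move=> d_ker; split.
- move=> j b wjb; have := d_ker (inl (inl (j, b))).
  by rewrite active_eval_zero /= wjb eqxx.
- by move=> j; have := d_ker (inl (inr j)); rewrite active_eval_sum.
- move=> j j' i a Hji Hj'i a_neq0; apply/eqP; rewrite -subr_eq0; apply/eqP.
  by have := d_ker (inr (j, j', i, a)); rewrite active_eval_consistent Hji Hj'i a_neq0.
Qed.

(* Shrinking the support along kernel directions ends at a vertex, which is
   the unique solution of a rational system. *)
Lemma optimal_rational w : optimal w -> nonzero_vec (marginals w) ->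
  exists w', [/\ optimal w', nonzero_vec (marginals w')
               & exists q, forall j b, w' j b = ratr (q j b)].
Proof.
have [k] := ubnP #|supp w|; elim: k w => // k IH w supp_lt w_opt w_nz.
have w_sol e :
    \sum_v w v.1 v.2 * ratr (active_coef rat w v e) = ratr (active_rhs rat e).
  rewrite ratr_active_rhs -(feasible_active_eval e w_opt.1).
  by apply: eq_bigr => v _; rewrite ratr_active_coef.
have [[q w_q] | [d d_ker [v dv]]] := rational_or_kernel w_sol.
  by exists w; split=> //; exists (fun j b => q (j, b)) => j b; apply: (w_q (j, b)).
have d_dir : direction w (fun j b => d (j, b)).
  apply: active_kernel_direction => e; rewrite -(d_ker e).
  by apply: eq_bigr => -[j b] _; rewrite ratr_active_coef.
have d_nz : exists u : 'I_m * word, d (u.1, u.2) != 0.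
  by exists v; rewrite -surjective_pairing.
have [w' [w'_opt w'_nz] supp_w'] := optimal_reduce w_opt w_nz d_dir d_nz.
by apply: IH w'_opt w'_nz; apply: leq_trans supp_w' _.
Qed.

Lemma optimal_rational_pseudocodeword w (q : 'I_m -> word -> rat) :
  optimal w -> nonzero_vec (marginals w) -> (forall j b, w j b = ratr (q j b)) ->
  exists h z, LPpseudocodeword H h z /\ nonzero_vec h /\ cost h <= 0.
Proof.
move=> w_opt w_nz w_q; have [[_ w_ge0 w_sum _] _] := w_opt.
have q_ge0 (v : 'I_m * word) : 0 <= q v.1 v.2 by rewrite -(ler0q real) -w_q.
have [D D_gt0 [z z_q]] := common_denominator q_ge0.
have z_w j b : (z (j, b))%:R = D%:R * w j b.
  by rewrite w_q -(ratr_nat real) (z_q (j, b)) rmorphM /= ratr_nat.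
have [_ [_ w_marg]] := feasible_inQ w_opt.1.
exists (fun i a => D%:R * marginals w i a), (fun j b => z (j, b)).
split; [split | split].
- move=> j i a Hji; rewrite (w_marg j) // mulr_sumr natr_sum.
  by apply: eq_bigr => b _; rewrite z_w.
- exists D => j; apply/eqP; rewrite -(eqr_nat real) natr_sum.
  by under eq_bigr do rewrite z_w; rewrite -mulr_sumr w_sum mulr1.
- by case: w_nz => i [a wia]; exists i, a; rewrite mulf_neq0 // pnatr_eq0 -lt0n.
- by rewrite costZ mulr_ge0_le0 ?optimal_wcost_le0.
Qed.

Definition restrict (w : weights) : weights :=
  fun j b => if b \in C j then w j b else 0.

Lemma marginal_restrict w j i a : marginal (restrict w) j i a = marginal w j i a.
Proof. by apply: eq_bigr => b /andP[Cb _]; rewrite /restrict Cb. Qed.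

Lemma marginals_restrict (f : vec) w j i a : inQ H f w -> H j i != 0 ->
  marginals (restrict w) i a = f i a.
Proof.
move=> [_ [_ f_marg]] Hji; rewrite /marginals; case: pickP => [j' Hj'i | no_check].
  by rewrite marginal_restrict (f_marg j').
by move: (no_check j); rewrite Hji.
Qed.

Lemma minimizer_optimal (f : vec) w : LPminimizer H p y f w -> optimal (restrict w).
Proof.
move=> [Qf f_min]; have [w_ge0 [w_sum f_marg]] := Qf.
have feas : feasible (restrict w).
  split.
  - by move=> j b /negbTE Cb; rewrite /restrict Cb.
  - by move=> j b; rewrite /restrict; case: ifP => // Cb; apply: w_ge0.
  - by move=> j; rewrite -(w_sum j); apply: eq_bigr => b Cb; rewrite /restrict Cb.
  - move=> j j' i a Hji Hj'i a_neq0; rewrite !marginal_restrict.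
    by rewrite /marginal -[a]/(val (exist (fun x => x != 0) a a_neq0)) -!f_marg.
split=> // u /feasible_inQ Qu; suff -> : wcost (restrict w) = cost f by exact: f_min Qu.
apply: eq_cost => i a.
case: (pickP (fun j => H j i != 0)) => [j Hji | i_free].
  by rewrite (marginals_restrict a Qf Hji).
rewrite (llr_free_eq0 a (conj Qf f_min)) ?mul0r // => j.
by apply/eqP; move: (i_free j) => /= /negbFE.
Qed.

(* With M = 0 a pseudocodeword is unconstrained at the coordinates that no
   check involves. *)
Lemma free_unit_pseudocodeword (f : vec) w i0 (a0 : nzR Rg) :
  LPminimizer H p y f w -> (forall j, H j i0 = 0) ->
  exists h z, LPpseudocodeword H h z /\ nonzero_vec h /\ cost h <= 0.
Proof.
move=> f_min i0_free.
exists (fun i a => if (i == i0) && (a == a0) then 1 else 0), (fun _ _ => 0%N).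
split; [split | split].
- move=> j i a Hji; case: eqP => [Ei|_] /=; last by rewrite big1_eq.
  by subst i; rewrite i0_free eqxx in Hji.
- by exists 0%N => j; rewrite big1_eq.
- by exists i0, a0; rewrite !eqxx oner_neq0.
- by rewrite cost_delta (llr_free_eq0 a0 f_min i0_free) mul0r.
Qed.

Lemma minimizer_pseudocodeword (f : vec) w :
  LPminimizer H p y f w -> nonzero_vec f ->
  exists h z, LPpseudocodeword H h z /\ nonzero_vec h /\ cost h <= 0.
Proof.
move=> f_min [i [a fia]].
case: (pickP (fun j => H j i != 0)) => [j Hji | i_free]; last first.
  apply: (free_unit_pseudocodeword (i0 := i) a f_min) => j.
  by apply/eqP; move: (i_free j) => /= /negbFE.
have w_nz : nonzero_vec (marginals (restrict w)).
  by exists i, a; rewrite (marginals_restrict a f_min.1 Hji).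
have [w' [w'_opt w'_nz [q w'_q]]] := optimal_rational (minimizer_optimal f_min) w_nz.
exact: optimal_rational_pseudocodeword w'_opt w'_nz w'_q.
Qed.

End LPDecoding.

Theorem theorem2 (Rg : finNzRingType) (m n : nat) (H : 'M[Rg]_(m, n))
  (real : realType) (Sigma : Type) (p : Sigma -> Rg -> real)
  (p_pos : forall s a, 0 < p s a) (y : 'I_n -> Sigma) :
  (forall (f : 'I_n -> nzR Rg -> real) (w : 'I_m -> {ffun 'I_n -> Rg} -> real),
      LPminimizer H p y f w -> nonzero_vec f ->
      exists (h : 'I_n -> nzR Rg -> real) (z : 'I_m -> {ffun 'I_n -> Rg} -> nat),
        LPpseudocodeword H h z /\ nonzero_vec h /\ cost p y h <= 0) /\
  ((exists (h : 'I_n -> nzR Rg -> real) (z : 'I_m -> {ffun 'I_n -> Rg} -> nat),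
        LPpseudocodeword H h z /\ nonzero_vec h /\ cost p y h < 0) ->
   forall (f : 'I_n -> nzR Rg -> real) (w : 'I_m -> {ffun 'I_n -> Rg} -> real),
      LPminimizer H p y f w -> nonzero_vec f).
Proof.
split; first exact: minimizer_pseudocodeword.
by move=> [h [z [hz [_ cost_h]]]] f w; apply: pseudocodeword_neg_cost_nonzero hz cost_h.
Qed.
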